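(* Let $\lambda_1<\dots<\lambda_N$ be real and $u\in\mathbb{R}^N$ with $u_1^2,\dots,u_N^2\in(0,1)$ and $\sum_{i=1}^Nu_i^2=1$, and set $s_{\lambda,u}(l)=\sum_{i=1}^N\frac{u_i^2}{l-\lambda_i}$ for $l>\lambda_N$. Then $$\sup_{\alpha\in[-1,1]}\left|\sup_{\sigma\in\mathbb{R}^N:\,|\sigma|=1,\,\sigma\cdot u=\alpha}\sum_{i=1}^N\lambda_i\sigma_i^2-\inf_{l>\lambda_N}\left\{l-\frac{\alpha^2}{s_{\lambda,u}(l)}\right\}\right|\le2(\lambda_N-\lambda_1)\frac{u_N^2}{\sqrt{1-u_N^2}}.$$ *)

From HB Require Import structures.
From mathcomp Require Import all_boot all_order all_algebra.
From mathcomp Require Import all_classical all_reals.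
Set Implicit Arguments. Unset Strict Implicit. Unset Printing Implicit Defensive.
Import Order.TTheory GRing.Theory Num.Theory.
Local Open Scope ring_scope.
Local Open Scope classical_set_scope.

Definition s_lu (R : realType) (N : nat) (lam u : 'I_N -> R) (l : R) : R :=
  \sum_(i < N) u i ^+ 2 / (l - lam i).

Definition sup_part (R : realType) (N : nat) (lam u : 'I_N -> R) (alpha : R) : R :=
  sup [set x : R | exists sigma : 'I_N -> R,
         [/\ Num.sqrt (\sum_(i < N) sigma i ^+ 2) = 1,
             \sum_(i < N) sigma i * u i = alpha &
             x = \sum_(i < N) lam i * sigma i ^+ 2]].

Definition inf_part (R : realType) (N : nat) (lam u : 'I_N -> R) (lamN alpha : R) : R :=
  inf [set y : R | exists2 l : R, lamN < l & y = l - alpha ^+ 2 / s_lu lam u l].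

From HB Require Import structures.
From mathcomp Require Import all_boot all_order all_algebra.
From mathcomp Require Import all_classical all_reals.
From mathcomp Require Import topology normedtype.
From mathcomp Require Import ring lra.
Import Order.TTheory GRing.Theory Num.Theory.
Import numFieldNormedType.Exports.
Local Open Scope ring_scope.
Local Open Scope classical_set_scope.
Set Implicit Arguments.

(* Completing the square termwise (Cauchy-Schwarz with weights
   l - lambda_i) gives weak duality: every feasible sigma has value at most
   l - alpha^2 / s(l) for every l > lambda_N. So it suffices to exhibit one
   feasible sigma and one l whose values differ by at most the bound.
   - If alpha^2 <= u_N^2, rotate (alpha, sqrt(1 - alpha^2)) in the plane of
     e_N and u so that sigma_N^2 >= 1 - u_N^2; the value of sigma is then at
     least lambda_N - u_N^2 (lambda_N - lambda_1), and l = lambda_N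
     + u_N^2 (lambda_N - lambda_1) does the job.
   - If u_N^2 < alpha^2 < 1, the intermediate value theorem gives l with
     s(l)^2 = alpha^2 t(l), where t = -s', and the Lagrange vector
     sigma_i = (alpha / s(l)) u_i / (l - lambda_i) closes the gap exactly.
   - If alpha^2 = 1 then sigma = alpha u is forced, and the gap is the
     difference of the arithmetic and harmonic means of the l - lambda_i
     with weights u_i^2, at most (lambda_N - lambda_1)^2 / (l - lambda_N). *)

Lemma planar_unit_vector {R : rcfType} (mu alpha : R) :
  mu ^+ 2 <= 1 -> alpha ^+ 2 <= mu ^+ 2 ->
  exists b G : R, [/\ b ^+ 2 + G ^+ 2 = 1,
    G * Num.sqrt (1 - mu ^+ 2) + b * mu = alpha & 1 - mu ^+ 2 <= b ^+ 2].
Proof.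
move=> mu_le1 alpha_le.
set v := Num.sqrt (1 - mu ^+ 2); set r := Num.sqrt (1 - alpha ^+ 2).
have v_ge0 : 0 <= v by exact: sqrtr_ge0.
have r_ge0 : 0 <= r by exact: sqrtr_ge0.
have v2 : v ^+ 2 = 1 - mu ^+ 2 by rewrite sqr_sqrtr // subr_ge0.
have r2 : r ^+ 2 = 1 - alpha ^+ 2 by rewrite sqr_sqrtr // subr_ge0; lra.
pose sg : R := if 0 <= alpha * mu then 1 else -1.
have sg2 : sg ^+ 2 = 1 by rewrite /sg; case: ifP => _; rewrite ?sqrrN expr1n.
have e_ge0 : 0 <= sg * (alpha * mu).
  rewrite /sg; case: ifPn => [|]; first by rewrite mul1r.
  by rewrite -ltNge mulN1r oppr_ge0 => /ltW.
(* [(b, G)] is [(alpha, r)] rotated by the angle of [(mu, v)], [r] signed like [alpha mu] *)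
exists (alpha * mu + sg * r * v), (alpha * v - sg * r * mu); split.
- transitivity ((alpha ^+ 2 + sg ^+ 2 * r ^+ 2) * (mu ^+ 2 + v ^+ 2)); first by ring.
  by rewrite sg2 r2 v2; ring.
- transitivity (alpha * (mu ^+ 2 + v ^+ 2)); first by ring.
  by rewrite v2 subrKC mulr1.
have e_ge : alpha ^+ 2 <= sg * (alpha * mu).
  have e2 : (sg * (alpha * mu)) ^+ 2 = alpha ^+ 2 * mu ^+ 2.
    by rewrite exprMn sg2 mul1r exprMn.
  have := sqr_ge0 alpha; nra.
have v_le_r : v <= r by rewrite -ler_sqr ?nnegrE // v2 r2; lra.
have -> : (alpha * mu + sg * r * v) ^+ 2
    = alpha ^+ 2 * mu ^+ 2 + 2 * (sg * (alpha * mu)) * r * v + sg ^+ 2 * r ^+ 2 * v ^+ 2.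
  by ring.
have : alpha ^+ 2 * (v * v) <= sg * (alpha * mu) * (r * v).
  by apply: ler_pM; rewrite ?sqr_ge0 ?mulr_ge0 ?ler_wpM2r.
rewrite sg2 r2 -[v * v]expr2 v2 => erv.
have := sqr_ge0 alpha; have := sqr_ge0 mu; nra.
Qed.

Lemma arith_sub_harmonic_mean_le (R : realFieldType) (N : nat) (c w : 'I_N -> R)
    (x D : R) :
  0 < x -> 0 <= D -> (forall i, 0 <= c i) -> \sum_(i < N) c i = 1 ->
  (forall i, x <= w i <= x + D) ->
  \sum_(i < N) c i * w i - (\sum_(i < N) c i / w i)^-1 <= D ^+ 2 / x.
Proof.
move=> x_gt0 D_ge0 c_ge0 c1 w_in.
have w_gt0 i : 0 < w i by case/andP: (w_in i) => /(lt_le_trans x_gt0).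
have const_sum (y : R) : \sum_(i < N) c i * y = y by rewrite -mulr_suml c1 mul1r.
set A := \sum_(i < N) c i * w i; set s := \sum_(i < N) c i / w i.
have [A_ge A_le] : x <= A /\ A <= x + D.
  split; [rewrite -(const_sum x) | rewrite -(const_sum (x + D))];
    by apply: ler_sum => i _; apply: ler_wpM2l => //; case/andP: (w_in i).
have s_gt0 : 0 < s.
  apply: (@lt_le_trans _ _ (x + D)^-1); first by rewrite invr_gt0 ltr_wpDr.
  rewrite -(const_sum (x + D)^-1); apply: ler_sum => i _; apply: ler_wpM2l => //.
  by rewrite lef_pV2 ?posrE ?w_gt0 ?ltr_wpDr //; case/andP: (w_in i).
(* termwise [x (x + D) / w <= 2 x + D - w], i.e. [(w - x) (x + D - w) >= 0] *)
have s_le : x * (x + D) * s <= 2 * x + D - A.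
  rewrite -(const_sum (2 * x + D)) -sumrB mulr_sumr; apply: ler_sum => i _.
  have [lo hi] := andP (w_in i); have wi_gt0 := w_gt0 i.
  rewrite mulrCA -mulrBr ler_wpM2l // ler_pdivrMr //; nra.
set H := s^-1.
have H_gt0 : 0 < H by rewrite invr_gt0.
have HB : x * (x + D) <= (2 * x + D - A) * H.
  have := ler_wpM2r (ltW H_gt0) s_le.
  by rewrite /H mulfK // gt_eqF.
rewrite ler_pdivlMr //.
have B_ge : x <= 2 * x + D - A by lra.
suff : x * (A - H) * (2 * x + D - A) <= D ^+ 2 * (2 * x + D - A).
  by rewrite ler_pM2r ?(lt_le_trans x_gt0) // mulrC.
have -> : x * (A - H) * (2 * x + D - A)
    = x * ((A - x) * (x + D - A)) + x * (x * (x + D) - (2 * x + D - A) * H) by ring.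
have spread : (A - x) * (x + D - A) <= D * D by apply: ler_pM; lra.
nra.
Qed.

Lemma continuous_sum_div_powB (R : realType) (N k : nat) (c b : 'I_N -> R) (x : R) :
  (forall i, x != b i) ->
  {for x, continuous (fun y => \sum_(i < N) c i / (y - b i) ^+ k)}.
Proof.
move=> xb.
have powB_cont i : {for x, continuous (fun y => (y - b i) ^+ k)}.
  elim: k => [|k IH]; first exact: cst_continuous.
  have -> : (fun y => (y - b i) ^+ k.+1) = (fun y => y - b i) \* (fun y => (y - b i) ^+ k).
    by apply: funext => y; rewrite /= exprS.
  by apply: continuousM => //; apply: continuousB; [exact: cvg_id | exact: cst_continuous].
have term_cont i : {for x, continuous (fun y => c i / (y - b i) ^+ k)}.
  apply: continuousM; first exact: cst_continuous.
  by apply: continuousV; [rewrite expf_neq0 // subr_eq0 | exact: powB_cont].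
by apply: cvg_big => [|i _]; [exact: add_continuous | exact: term_cont].
Qed.

Section secular_function.
Context {R : realType} {N : nat} (lam u : 'I_N -> R).

(* [t_lu] is [- s_lu'] *)
Definition t_lu (l : R) : R := \sum_(i < N) u i ^+ 2 / (l - lam i) ^+ 2.

Lemma s_lu_continuous l : (forall i, lam i < l) -> {for l, continuous (s_lu lam u)}.
Proof. by move=> lam_lt; apply: (@continuous_sum_div_powB R N 1) => i; rewrite gt_eqF. Qed.

Lemma t_lu_continuous l : (forall i, lam i < l) -> {for l, continuous t_lu}.
Proof. by move=> lam_lt; apply: continuous_sum_div_powB => i; rewrite gt_eqF. Qed.

Lemma s_lu_ge0 l : (forall i, lam i < l) -> 0 <= s_lu lam u l.
Proof.
move=> lam_lt; apply: sumr_ge0 => i _.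
by rewrite divr_ge0 ?sqr_ge0 // subr_ge0 ltW.
Qed.

Lemma sum_lam_sqr_eq l {sigma : 'I_N -> R} : \sum_(i < N) sigma i ^+ 2 = 1 ->
  \sum_(i < N) lam i * sigma i ^+ 2 = l - \sum_(i < N) (l - lam i) * sigma i ^+ 2.
Proof.
move=> sigma1; under [in RHS]eq_bigr do rewrite mulrBl.
by rewrite sumrB -mulr_sumr sigma1 mulr1 subKr.
Qed.

Lemma weak_duality (sigma : 'I_N -> R) l : (forall i, lam i < l) ->
  \sum_(i < N) sigma i ^+ 2 = 1 ->
  \sum_(i < N) lam i * sigma i ^+ 2
    <= l - (\sum_(i < N) sigma i * u i) ^+ 2 / s_lu lam u l.
Proof.
move=> lam_lt sigma1; rewrite (sum_lam_sqr_eq l sigma1) lerD2l lerN2.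
have w_gt0 i : 0 < l - lam i by rewrite subr_gt0.
set alpha := \sum_(i < N) sigma i * u i; set s := s_lu lam u l.
have [->|s_neq0] := eqVneq s 0.
  by rewrite invr0 mulr0; apply: sumr_ge0 => i _; rewrite mulr_ge0 ?sqr_ge0 ?ltW.
pose k := alpha / s.
have tangent i : 2 * k * (sigma i * u i) - k ^+ 2 * (u i ^+ 2 / (l - lam i))
    <= (l - lam i) * sigma i ^+ 2.
  rewrite -subr_ge0.
  have -> : (l - lam i) * sigma i ^+ 2
      - (2 * k * (sigma i * u i) - k ^+ 2 * (u i ^+ 2 / (l - lam i)))
      = ((l - lam i) * sigma i - k * u i) ^+ 2 / (l - lam i).
    by field; rewrite gt_eqF.
  by rewrite divr_ge0 ?sqr_ge0 ?ltW.
have -> : alpha ^+ 2 / s = 2 * k * alpha - k ^+ 2 * s by rewrite /k; field.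
by rewrite /alpha /s /s_lu !mulr_sumr -sumrB; apply: ler_sum => i _; exact: tangent.
Qed.

Lemma lagrange_point_value {l alpha} : (forall i, lam i < l) -> s_lu lam u l != 0 ->
  s_lu lam u l ^+ 2 = alpha ^+ 2 * t_lu l ->
  exists sigma : 'I_N -> R, [/\ \sum_(i < N) sigma i ^+ 2 = 1,
    \sum_(i < N) sigma i * u i = alpha &
    \sum_(i < N) lam i * sigma i ^+ 2 = l - alpha ^+ 2 / s_lu lam u l].
Proof.
move=> lam_lt s_neq0 s2.
have w_neq0 i : l - lam i != 0 by rewrite subr_eq0 gt_eqF.
set s := s_lu lam u l in s_neq0 s2 *.
pose k := alpha / s.
exists (fun i => k * u i / (l - lam i)).
have sigma1 : \sum_(i < N) (k * u i / (l - lam i)) ^+ 2 = 1.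
  transitivity (k ^+ 2 * t_lu l).
    by rewrite /t_lu mulr_sumr; apply: eq_bigr => i _; field.
  by rewrite /k expr_div_n mulrAC -s2 divff // expf_neq0.
split => //.
  transitivity (k * s); last by rewrite /k divfK.
  by rewrite /s /s_lu mulr_sumr; apply: eq_bigr => i _; field.
rewrite (sum_lam_sqr_eq l sigma1); congr (l - _).
transitivity (k ^+ 2 * s); last by rewrite /k; field.
by rewrite /s /s_lu mulr_sumr; apply: eq_bigr => i _; field.
Qed.

Definition gap_certified (lamN alpha C : R) : Prop :=
  exists sigma : 'I_N -> R, exists2 l : R, lamN < l &
    [/\ \sum_(i < N) sigma i ^+ 2 = 1, \sum_(i < N) sigma i * u i = alpha &
        l - alpha ^+ 2 / s_lu lam u l - \sum_(i < N) lam i * sigma i ^+ 2 <= C].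

Lemma gap_le_of_certified lamN alpha C : (forall i, lam i <= lamN) ->
  gap_certified lamN alpha C ->
  `|sup_part lam u alpha - inf_part lam u lamN alpha| <= C.
Proof.
move=> lam_le [sigma0 [l0 l0_gt [sigma0_1 sigma0_u gap0]]].
rewrite /sup_part /inf_part; set F := (X in sup X); set G := (X in inf X).
have dual x y : F x -> G y -> x <= y.
  move=> [sigma [sqrt1 sigma_u ->]] [l l_gt ->]; rewrite -sigma_u.
  apply: weak_duality.
    by move=> i; apply: le_lt_trans l_gt.
  by rewrite -[LHS]sqr_sqrtr ?sqrt1 ?expr1n // sumr_ge0 // => i _; exact: sqr_ge0.
have F0 : F (\sum_(i < N) lam i * sigma0 i ^+ 2) by exists sigma0; rewrite sigma0_1 sqrtr1.
have G0 : G (l0 - alpha ^+ 2 / s_lu lam u l0) by exists l0.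
have le_supF : \sum_(i < N) lam i * sigma0 i ^+ 2 <= sup F.
  by apply: ub_le_sup => //; exists (l0 - alpha ^+ 2 / s_lu lam u l0) => x /dual; apply.
have infG_le : inf G <= l0 - alpha ^+ 2 / s_lu lam u l0.
  by apply: ge_inf => //; exists (\sum_(i < N) lam i * sigma0 i ^+ 2) => y Gy; apply: dual.
have supF_le : sup F <= inf G.
  apply: ge_sup; first by exists (\sum_(i < N) lam i * sigma0 i ^+ 2).
  move=> x Fx; apply: lb_le_inf; first by exists (l0 - alpha ^+ 2 / s_lu lam u l0).
  by move=> y /(dual _ _ Fx).
rewrite ler0_norm ?subr_le0 // opprB; lra.
Qed.

End secular_function.

Section spectral_gap.
Context {R : realType} {n : nat} {lam u : 'I_n.+1 -> R}.
Hypothesis lam_incr : forall i j : 'I_n.+1, (i < j)%N -> lam i < lam j.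
Hypothesis u_max_bounds : 0 < u ord_max ^+ 2 < 1.
Hypothesis u_unit : \sum_(i < n.+1) u i ^+ 2 = 1.

Local Notation lamN := (lam ord_max).
Local Notation p := (u ord_max ^+ 2).
Local Notation D := (lam ord_max - lam ord0).
Local Notation C := (2 * D * (p / Num.sqrt (1 - p))).
Local Notation widen := (widen_ord (leqnSn n)).

Lemma lam_le_max i : lam i <= lamN.
Proof.
have := leq_ord i; rewrite leq_eqVlt => /orP[/eqP i_n|i_lt]; last exact/ltW/lam_incr.
by rewrite (_ : i = ord_max) //; apply: val_inj.
Qed.

Lemma lam_min_le i : lam ord0 <= lam i.
Proof.
have [i0|i_gt0] := posnP i; last exact/ltW/lam_incr.
by rewrite (_ : i = ord0) //; apply: val_inj.
Qed.

Lemma lam_lt_max (i : 'I_n) : lam (widen i) < lamN.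
Proof. by apply: lam_incr; rewrite /= ltn_ord. Qed.

Lemma sum_sqr_but_last : \sum_(i < n) u (widen i) ^+ 2 = 1 - p.
Proof. by rewrite -u_unit big_ord_recr addrK. Qed.

Lemma spread_gt0 : 0 < D.
Proof.
have [i _] : exists i : 'I_n, predT i && (0 < u (widen i) ^+ 2).
  apply: psumr_neq0P => [i _|]; first exact: sqr_ge0.
  rewrite sum_sqr_but_last; apply/eqP; rewrite subr_eq0 eq_sym lt_eqF //.
  by case/andP: u_max_bounds.
by rewrite subr_gt0 (le_lt_trans (lam_min_le (widen i))) ?lam_lt_max.
Qed.

Lemma gap_bound_ge : 2 * D * p <= C.
Proof.
have [p_gt0 p_lt1] := andP u_max_bounds.
have v_gt0 : 0 < Num.sqrt (1 - p) by rewrite sqrtr_gt0 subr_gt0.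
rewrite ler_pM2l ?mulr_gt0 ?spread_gt0 // ler_pdivlMr // ler_piMr ?ltW //.
by rewrite -[ltRHS]sqrtr1 ltr_sqrt // gtrBl.
Qed.

Lemma s_lu_gt0 {l} : lamN < l -> 0 < s_lu lam u l.
Proof.
move=> l_gt; rewrite /s_lu big_ord_recr /= ltr_wpDl //.
  apply: sumr_ge0 => i _; rewrite divr_ge0 ?sqr_ge0 //.
  by rewrite subr_ge0 ltW // (lt_trans (lam_lt_max i)).
by rewrite divr_gt0 ?subr_gt0 //; case/andP: u_max_bounds.
Qed.

Lemma lam_lt_of_max_lt {l} : lamN < l -> forall i, lam i < l.
Proof. by move=> l_gt i; exact: le_lt_trans (lam_le_max i) l_gt. Qed.

Lemma sum_lam_sqr_ge {sigma : 'I_n.+1 -> R} : \sum_(i < n.+1) sigma i ^+ 2 = 1 ->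
  lamN - D * (1 - sigma ord_max ^+ 2) <= \sum_(i < n.+1) lam i * sigma i ^+ 2.
Proof.
move=> sigma1.
have init1 : \sum_(i < n) sigma (widen i) ^+ 2 = 1 - sigma ord_max ^+ 2.
  by rewrite -sigma1 big_ord_recr addrK.
have -> : lamN - D * (1 - sigma ord_max ^+ 2)
    = lam ord0 * (1 - sigma ord_max ^+ 2) + lamN * sigma ord_max ^+ 2 by ring.
rewrite big_ord_recr /= lerD2r -init1 mulr_sumr; apply: ler_sum => i _.
by rewrite ler_wpM2r ?sqr_ge0 ?lam_min_le.
Qed.

Lemma exists_unit_with_last {alpha b G : R} :
  b ^+ 2 + G ^+ 2 = 1 -> G * Num.sqrt (1 - p) + b * u ord_max = alpha ->
  exists sigma : 'I_n.+1 -> R, [/\ \sum_(i < n.+1) sigma i ^+ 2 = 1,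
    \sum_(i < n.+1) sigma i * u i = alpha & sigma ord_max = b].
Proof.
move=> bG1 bG_u; set v := Num.sqrt (1 - p) in bG_u.
have [p_gt0 p_lt1] := andP u_max_bounds.
have v2 : v ^+ 2 = 1 - p by rewrite sqr_sqrtr // subr_ge0 ltW.
have v_neq0 : v != 0 by rewrite gt_eqF // sqrtr_gt0 subr_gt0.
exists (fun i : 'I_n.+1 => if (i < n)%N then G * u i / v else b).
rewrite !big_ord_recr /= ltnn; split => //.
- rewrite (eq_bigr (fun i : 'I_n => G ^+ 2 / v ^+ 2 * u (widen i) ^+ 2)) => [|i _]; last first.
    by rewrite /= ltn_ord; field.
  by rewrite -mulr_sumr sum_sqr_but_last -v2 mulfVK ?expf_neq0 // addrC.
rewrite (eq_bigr (fun i : 'I_n => G / v * u (widen i) ^+ 2)) => [|i _]; last first.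
  by rewrite /= ltn_ord; field.
by rewrite -mulr_sumr sum_sqr_but_last -v2 -bG_u; field.
Qed.

Lemma dist_to_lam_bounds x i : x <= lamN + x - lam i <= x + D.
Proof. by have := lam_le_max i; have := lam_min_le i => *; apply/andP; split; lra. Qed.

Lemma gap_certified_small alpha : alpha ^+ 2 <= p -> gap_certified lam u lamN alpha C.
Proof.
move=> alpha_small.
have [p_gt0 p_lt1] := andP u_max_bounds.
have [b [G [bG1 bG_u b_large]]] :=
  planar_unit_vector (u ord_max) alpha (ltW p_lt1) alpha_small.
have [sigma [sigma1 sigma_u sigmaN]] := exists_unit_with_last bG1 bG_u.
have D_gt0 := spread_gt0.
exists sigma, (lamN + p * D); first by rewrite ltrDl mulr_gt0.
split => //.
have := sum_lam_sqr_ge sigma1; rewrite sigmaN => obj_ge.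
have : 0 <= alpha ^+ 2 / s_lu lam u (lamN + p * D).
  by rewrite divr_ge0 ?sqr_ge0 // ltW // s_lu_gt0 // ltrDl mulr_gt0.
have := gap_bound_ge; nra.
Qed.

Lemma gap_certified_unit alpha : alpha ^+ 2 = 1 -> gap_certified lam u lamN alpha C.
Proof.
move=> alpha2.
have [p_gt0 p_lt1] := andP u_max_bounds.
have D_gt0 := spread_gt0.
set v := Num.sqrt (1 - p).
have v_gt0 : 0 < v by rewrite sqrtr_gt0 subr_gt0.
(* the distance to [lamN] at which the bound below equals [C] *)
set x := D * v / (2 * p).
have x_gt0 : 0 < x by apply: divr_gt0; apply: mulr_gt0.
exists (fun i => alpha * u i), (lamN + x); first by rewrite ltrDl.
split.
- by rewrite -u_unit; apply: eq_bigr => i _; rewrite exprMn alpha2 mul1r.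
- by rewrite -[RHS]mulr1 -u_unit mulr_sumr; apply: eq_bigr => i _; rewrite mulrA.
have -> : \sum_(i < n.+1) lam i * (alpha * u i) ^+ 2
    = lamN + x - \sum_(i < n.+1) u i ^+ 2 * (lamN + x - lam i).
  under [X in _ = _ - X]eq_bigr do rewrite mulrBr.
  rewrite sumrB -mulr_suml u_unit mul1r opprB addrC subrK.
  by apply: eq_bigr => i _; rewrite exprMn alpha2 mul1r mulrC.
rewrite alpha2 mul1r opprB addrC subrKA.
have -> : C = D ^+ 2 / x.
  by rewrite /x /v; field; rewrite -sqrf_eq0 (gt_eqF p_gt0) (gt_eqF v_gt0) (gt_eqF D_gt0).
apply: arith_sub_harmonic_mean_le => // [|i|i]; first exact: ltW.
  exact: sqr_ge0.
exact: dist_to_lam_bounds.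
Qed.

Lemma secular_sqr_le_near {a} : p < a < 1 ->
  exists2 x, 0 < x & s_lu lam u (lamN + x) ^+ 2 <= a * t_lu lam u (lamN + x).
Proof.
move=> /andP[p_lt_a a_lt1].
have [p_gt0 p_lt1] := andP u_max_bounds.
set K := \sum_(i < n) u (widen i) ^+ 2 / (lamN - lam (widen i)).
have K_ge0 : 0 <= K.
  by apply: sumr_ge0 => i _; rewrite divr_ge0 ?sqr_ge0 // subr_ge0 ltW ?lam_lt_max.
(* small enough for [(p + K x)^2 <= a p] *)
set x := (a - p) * p / (3 * (K + 1)).
have K1_gt0 : 0 < K + 1 by rewrite ltr_wpDl.
have x_gt0 : 0 < x by apply: divr_gt0; apply: mulr_gt0; rewrite // subr_gt0.
have Kx_le : K * x <= (a - p) * p / 3.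
  have -> : K * x = K / (K + 1) * ((a - p) * p / 3) by rewrite /x; field; rewrite gt_eqF.
  have : 0 <= (a - p) * p / 3 by apply: divr_ge0 => //; apply: mulr_ge0; rewrite ?subr_ge0 ltW.
  move/ler_piMl; apply; rewrite ler_pdivrMr // mul1r lerDl //.
exists x => //; set l := lamN + x.
have lN : l - lamN = x by rewrite /l addrC addKr.
have s_le : s_lu lam u l <= p / x + K.
  rewrite /s_lu big_ord_recr /= lN addrC lerD2l; apply: ler_sum => i _.
  have wN_gt0 : 0 < lamN - lam (widen i) by rewrite subr_gt0 lam_lt_max.
  have wN_le : lamN - lam (widen i) <= l - lam (widen i) by rewrite lerD2r lerDl ltW.
  apply: ler_wpM2l; first exact: sqr_ge0.
  by rewrite lef_pV2 ?posrE ?(lt_le_trans wN_gt0).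
have t_ge : p / x ^+ 2 <= t_lu lam u l.
  rewrite /t_lu big_ord_recr /= lN lerDr.
  by apply: sumr_ge0 => i _; rewrite divr_ge0 ?sqr_ge0.
have s_ge0 : 0 <= s_lu lam u l by apply: s_lu_ge0; apply: lam_lt_of_max_lt; rewrite ltrDl.
apply: (@le_trans _ _ ((p / x + K) ^+ 2)); first by rewrite !expr2 ler_pM.
have pt_le : a * (p / x ^+ 2) <= a * t_lu lam u l.
  by apply: ler_wpM2l; rewrite // ltW // (lt_trans p_gt0).
apply: (le_trans _ pt_le).
have -> : (p / x + K) ^+ 2 = (p + K * x) ^+ 2 / x ^+ 2 by field; rewrite gt_eqF.
rewrite [leRHS]mulrA ler_pM2r ?invr_gt0 ?exprn_gt0 //.
have := mulr_ge0 K_ge0 (ltW x_gt0); nra.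
Qed.

Lemma secular_sqr_ge_far a x : 0 <= a -> 0 < x -> a * D <= (1 - a) * x ->
  a * t_lu lam u (lamN + x) <= s_lu lam u (lamN + x) ^+ 2.
Proof.
move=> a_ge0 x_gt0 x_large.
have w_in := dist_to_lam_bounds x.
have w_gt0 i : 0 < lamN + x - lam i by case/andP: (w_in i) => /(lt_le_trans x_gt0).
have s_gt0 : 0 < s_lu lam u (lamN + x) by apply: s_lu_gt0; rewrite ltrDl.
have D_gt0 := spread_gt0.
have s_ge : (x + D)^-1 <= s_lu lam u (lamN + x).
  rewrite -[leLHS]mul1r -u_unit mulr_suml; apply: ler_sum => i _.
  apply: ler_wpM2l; first exact: sqr_ge0.
  by case/andP: (w_in i) => _ w_le; rewrite lef_pV2 ?posrE ?w_gt0 ?(addr_gt0 x_gt0 D_gt0).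
have t_le : t_lu lam u (lamN + x) <= s_lu lam u (lamN + x) / x.
  rewrite /t_lu /s_lu mulr_suml; apply: ler_sum => i _.
  rewrite expr2 invfM mulrA; apply: ler_wpM2l; first by rewrite divr_ge0 ?sqr_ge0 ?ltW.
  by case/andP: (w_in i) => x_le _; rewrite lef_pV2 ?posrE ?w_gt0.
apply: (@le_trans _ _ (a * (s_lu lam u (lamN + x) / x))); first exact: ler_wpM2l.
rewrite mulrA ler_pdivrMr // expr2 [leLHS]mulrC -mulrA ler_pM2l //.
have : 1 <= s_lu lam u (lamN + x) * (x + D).
  by rewrite -ler_pdivrMr ?(addr_gt0 x_gt0 D_gt0) // mul1r.
nra.
Qed.

Lemma exists_lagrange_point {a} : p < a < 1 ->
  exists2 l, lamN < l & s_lu lam u l ^+ 2 = a * t_lu lam u l.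
Proof.
move=> a_in; have /andP[p_lt_a a_lt1] := a_in.
have [p_gt0 _] := andP u_max_bounds.
have a_ge0 : 0 <= a by rewrite ltW // (lt_trans p_gt0).
have [x0 x0_gt0 near] := secular_sqr_le_near a_in.
set x1 := x0 + a * D / (1 - a).
have aD_ge0 : 0 <= a * D / (1 - a).
  by apply: divr_ge0; [exact: mulr_ge0 a_ge0 (ltW spread_gt0) | rewrite subr_ge0 ltW].
have far : a * t_lu lam u (lamN + x1) <= s_lu lam u (lamN + x1) ^+ 2.
  apply: secular_sqr_ge_far => //; first exact: ltr_wpDr.
  have -> : (1 - a) * x1 = (1 - a) * x0 + a * D.
    by rewrite /x1; field; rewrite subr_eq0 eq_sym lt_eqF.
  by rewrite lerDr mulr_ge0 // ?subr_ge0 ltW.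
pose f l := s_lu lam u l ^+ 2 - a * t_lu lam u l.
have f_cont : {within `[lamN + x0, lamN + x1], continuous f}.
  apply: continuous_in_subspaceT => l; rewrite inE /= in_itv /= => /andP[l_ge _].
  have lam_lt := lam_lt_of_max_lt (lt_le_trans (ltr_pwDr x0_gt0 (lexx _)) l_ge).
  apply: (@continuousB _ _ _ (fun l => s_lu lam u l ^+ 2) (fun l => a * t_lu lam u l)).
    by apply: continuousM; exact: s_lu_continuous.
  by apply: continuousM; [exact: cst_continuous | exact: t_lu_continuous].
have l0_le_l1 : lamN + x0 <= lamN + x1 by rewrite lerD2l lerDl.
have [|l l_in fl0] := IVT (v := 0) l0_le_l1 f_cont.
  by rewrite /f ge_min le_max subr_le0 near /= [in X in _ || X]subr_ge0 far orbT.
exists l; last by apply/eqP; rewrite -subr_eq0 -/(f l) fl0.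
by move: l_in; rewrite in_itv /= => /andP[l_ge _]; apply: lt_le_trans l_ge; rewrite ltrDl.
Qed.

Lemma gap_certified_mid alpha : p < alpha ^+ 2 < 1 -> gap_certified lam u lamN alpha 0.
Proof.
move=> alpha2_in; have [l l_gt s2] := exists_lagrange_point alpha2_in.
have [sigma [sigma1 sigma_u value]] :=
  lagrange_point_value lam u (lam_lt_of_max_lt l_gt) (lt0r_neq0 (s_lu_gt0 l_gt)) s2.
by exists sigma, l => //; split; rewrite // value subrr.
Qed.

Lemma gap_certified_bound {alpha} : -1 <= alpha <= 1 -> gap_certified lam u lamN alpha C.
Proof.
move=> alpha_in.
have [small|large] := lerP (alpha ^+ 2) p; first exact: gap_certified_small.
have alpha2_le1 : alpha ^+ 2 <= 1 by case/andP: alpha_in => *; nra.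
have [/eqP alpha2|alpha2_neq1] := boolP (alpha ^+ 2 == 1); first exact: gap_certified_unit.
have [|sigma [l l_gt [sigma1 sigma_u gap0]]] := gap_certified_mid alpha.
  by rewrite large lt_neqAle alpha2_neq1.
exists sigma, l => //; split => //; apply: le_trans gap0 (le_trans _ gap_bound_ge).
have [p_gt0 _] := andP u_max_bounds.
by apply: mulr_ge0; [apply: mulr_ge0 => //; exact: ltW spread_gt0 | exact: ltW].
Qed.

End spectral_gap.

Theorem corollary3p5 (R : realType) (n : nat) (lam u : 'I_n.+1 -> R)
  (hlam : forall i j : 'I_n.+1, (i < j)%N -> lam i < lam j)
  (hu : forall i : 'I_n.+1, 0 < u i ^+ 2 < 1)
  (hsum : \sum_(i < n.+1) u i ^+ 2 = 1) :
  sup [set z : R | exists2 alpha : R, -1 <= alpha <= 1 &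
         z = `| sup_part lam u alpha - inf_part lam u (lam ord_max) alpha |]
  <= 2 * (lam ord_max - lam ord0) * (u ord_max ^+ 2 / Num.sqrt (1 - u ord_max ^+ 2)).
Proof.
apply: ge_sup => [|_ [alpha alpha_in ->]].
  by eexists; exists 0; rewrite ?lerN10 ?ler01.
apply: gap_le_of_certified; first exact: lam_le_max hlam.
exact: (gap_certified_bound hlam (hu ord_max) hsum alpha_in).
Qed.
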